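(* Let $L_1\geq 1$, $L_2\geq 2$, and let $A\in\mathbb{R}^{J\times N}$ have one-hot columns. Suppose $\sigma$ is Lipschitz continuous with constant $B>0$. Then for all parameters $\{K_l,b_l,c_l\}_{l=1}^{L_1}$ and $\{\hat W_{L_2},\hat W_l,\hat b_l,\hat c_l\}_{l=1}^{L_2-1}$ (of compatible sizes), $$\mathcal{L}(\phi_{\mathrm{CNN}}(\hat X;\theta),A)\leq C_B\cdot\sqrt{L_1+L_2-1}\cdot\mathcal{L}^{\mathrm{CNN}}_{\mathrm S},$$ where $C_B=\max\{\sqrt2,\,2B,\,2B^{L_1+L_2-1}\}$.
   Context: Cross-entropy: for $\boldsymbol z\in\mathbb{R}^J$ and one-hot $\boldsymbol\alpha$ (entries in $\{0,1\}$ summing to 1), $\ell(\boldsymbol z,\boldsymbol\alpha)=-\sum_j\alpha_j\ln\big(e^{z_j}/\sum_ke^{z_k}\big)$; for $Z=[\boldsymbol z_1\cdots\boldsymbol z_N]$, $\mathcal{L}_{\mathrm{vec}}(Z,A)=[\ell(\boldsymbol z_n,\boldsymbol\alpha_n)]_{n=1}^N$ and $\mathcal{L}(Z,A)=\frac1N\sum_n\ell(\boldsymbol z_n,\boldsymbol\alpha_n)$. Input data $\hat X\in\mathbb{R}^{d\times N}$ (columns are vectorized input images). The CNN (single channel) is $\phi_{\mathrm{CNN}}(\boldsymbol x;\theta)=\hat W_{L_2}\sigma(\hat W_{L_2-1}\sigma(\cdots\sigma(\hat W_1P_{L_1}\sigma(K_{L_1}P_{L_1-1}\sigma(\cdots P_1\sigma(K_1\boldsymbol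 x+b_1)\cdots)+b_{L_1})+\hat b_1)\cdots)+\hat b_{L_2-1})$, where $K_l$ are matrices (representing convolutions), $P_l$ are fixed matrices (representing pooling), $b_l,\hat b_l$ are bias vectors, $\hat W_l$ are weight matrices, all of compatible sizes, $\sigma$ acts entrywise, and $\phi_{\mathrm{CNN}}(\hat X;\theta)$ applies it columnwise. With $\mathbf 1\in\mathbb{R}^N$ all-ones, weights: $\omega_{L_1}=\big(\prod_{k=2}^{L_2}\|\hat W_k\|_{\mathrm F}^2\big)\|\hat W_1P_{L_1}\|_{\mathrm F}^2$, $\omega_l=\omega_{L_1}\prod_{j=l+1}^{L_1}\|K_jP_{j-1}\|_{\mathrm F}^2$ for $l=1,\dots,L_1-1$, $\hat\omega_l=\prod_{k=l+1}^{L_2}\|\hat W_k\|_{\mathrm F}^2$ for $l=1,\dots,L_2-1$. Define $T=\|\mathcal{L}_{\mathrm{vec}}(\hat W_{L_2}\sigma(\hat c_{L_2-1}),A)\|_2^2+\sum_{l=2}^{L_1}\omega_l\|K_lP_{l-1}\sigma(c_{l-1})+b_l\mathbf 1^\top-c_l\|_{\mathrm F}^2+\omega_1\|K_1\hat X+b_1\mathbf 1^\top-c_1\|_{\mathrm F}^2+\sum_{l=2}^{L_2-1}\hat\omega_l\|\hat W_l\sigma(\hat c_{l-1})+\hat b_l\mathbf 1^\top-\hat c_l\|_{\mathrm F}^2+\hat\omega_1\|\hat W_1P_{L_1}\sigma(c_{L_1})+\hat b_1\mathbf 1^\top-\hat c_1\|_{\mathrm F}^2$, and $\mathcal{L}^{\mathrm{CNN}}_{\mathrm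 S}=\frac1{\sqrt N}T^{1/2}$. *)

From HB Require Import structures.
From mathcomp Require Import all_boot all_order all_algebra.
From mathcomp Require Import reals.
From mathcomp Require Import sequences exp.
Set Implicit Arguments. Unset Strict Implicit. Unset Printing Implicit Defensive.
Import Order.TTheory GRing.Theory Num.Theory.
Local Open Scope ring_scope.

Section CNN.
Variable R : realType.

Definition frob2 (m n : nat) (M : 'M[R]_(m, n)) : R :=
  \sum_(i < m) \sum_(j < n) M i j ^+ 2.

Definition xent (J : nat) (z alpha : 'cV[R]_J) : R :=
  - \sum_(j < J) alpha j 0 * ln (expR (z j 0) / \sum_(k < J) expR (z k 0)).

Definition Lvec (J N : nat) (Z A : 'M[R]_(J, N)) : 'rV[R]_N :=
  \row_(n < N) xent (col n Z) (col n A).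

Definition Lmean (J N : nat) (Z A : 'M[R]_(J, N)) : R :=
  N%:R^-1 * \sum_(n < N) xent (col n Z) (col n A).

Definition one_hot_cols (J N : nat) (A : 'M[R]_(J, N)) : Prop :=
  forall n : 'I_N, (forall j : 'I_J, A j n = 0 \/ A j n = 1) /\
                   \sum_(j < J) A j n = 1.

Definition lipschitz_with (sigma : R -> R) (B : R) : Prop :=
  forall x y : R, `|sigma x - sigma y| <= B * `|x - y|.

Definition smap (sigma : R -> R) (m n : nat) (M : 'M[R]_(m, n)) : 'M[R]_(m, n) :=
  map_mx sigma M.

(* ----- architecture (0-indexed layers) -----
   Convolutional layers i = 0 .. L1-1 (paper's l = i+1):
     K i : 'M_(m i, qin d p i), with qin d p 0 = d and qin d p (j+1) = p j,
     P i : 'M_(p i, m i), b i : 'cV_(m i), c i : 'M_(m i, N).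
   Fully connected hidden layers j = 0 .. L2-2 (paper's l = j+1):
     Wh j : 'M_(n j, fin j), with fin 0 = p (L1-1), fin (j+1) = n j,
     bh j : 'cV_(n j), ch j : 'M_(n j, N).
   Output layer: Wl : 'M_(J, n (L2-2))  (paper's hat W_{L2}). *)
Definition qin (d : nat) (p : nat -> nat) (i : nat) : nat :=
  match i with 0 => d | S j => p j end.

Definition fin (L1 : nat) (p n : nat -> nat) (j : nat) : nat :=
  match j with 0 => p L1.-1 | S k => n k end.

Variables (sigma : R -> R) (d J : nat) (L1 L2 : nat) (m p n : nat -> nat).
Variable K : forall i : nat, 'M[R]_(m i, qin d p i).
Variable P : forall i : nat, 'M[R]_(p i, m i).
Variable b : forall i : nat, 'cV[R]_(m i).
Variable Wh : forall j : nat, 'M[R]_(n j, fin L1 p n j).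
Variable bh : forall j : nat, 'cV[R]_(n j).
Variable Wl : 'M[R]_(J, n L2.-2).

Fixpoint conv_pre (x : 'cV[R]_d) (i : nat) : 'cV[R]_(m i) :=
  match i as i0 return 'cV[R]_(m i0) with
  | 0 => K 0 *m x + b 0
  | S j => K (S j) *m (P j *m smap sigma (conv_pre x j)) + b (S j)
  end.

Fixpoint fc_pre (x : 'cV[R]_d) (j : nat) : 'cV[R]_(n j) :=
  match j as j0 return 'cV[R]_(n j0) with
  | 0 => Wh 0 *m (P L1.-1 *m smap sigma (conv_pre x L1.-1)) + bh 0
  | S k => Wh (S k) *m smap sigma (fc_pre x k) + bh (S k)
  end.

Definition phi_CNN (x : 'cV[R]_d) : 'cV[R]_J :=
  Wl *m smap sigma (fc_pre x L2.-2).

Definition phi_CNN_mat (N : nat) (X : 'M[R]_(d, N)) : 'M[R]_(J, N) :=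
  \matrix_(j < J, k < N) phi_CNN (col k X) j 0.

Variable N : nat.
Variable c : forall i : nat, 'M[R]_(m i, N).
Variable ch : forall j : nat, 'M[R]_(n j, N).

Definition ones : 'rV[R]_N := const_mx 1.

(* ||K_l P_{l-1}||_F^2 for the paper's l = i+1 >= 2 (i >= 1) *)
Definition KP2 (i : nat) : R :=
  match i with 0 => 0 | S j => frob2 (K (S j) *m P j) end.

Definition omega_last : R :=
  (\prod_(1 <= k < L2.-1) frob2 (Wh k)) * frob2 Wl * frob2 (Wh 0 *m P L1.-1).

Definition omega (i : nat) : R :=
  omega_last * \prod_(i.+1 <= k < L1) KP2 k.

Definition omegah (j : nat) : R :=
  (\prod_(j.+1 <= k < L2.-1) frob2 (Wh k)) * frob2 Wl.

Definition conv_res (X : 'M[R]_(d, N)) (i : nat) : 'M[R]_(m i, N) :=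
  match i as i0 return 'M[R]_(m i0, N) with
  | 0 => K 0 *m X + b 0 *m ones - c 0
  | S j => K (S j) *m (P j *m smap sigma (c j)) + b (S j) *m ones - c (S j)
  end.

Definition fc_res (j : nat) : 'M[R]_(n j, N) :=
  match j as j0 return 'M[R]_(n j0, N) with
  | 0 => Wh 0 *m (P L1.-1 *m smap sigma (c L1.-1)) + bh 0 *m ones - ch 0
  | S k => Wh (S k) *m smap sigma (ch k) + bh (S k) *m ones - ch (S k)
  end.


Definition Tlift (X : 'M[R]_(d, N)) (A : 'M[R]_(J, N)) : R :=
  frob2 (Lvec (Wl *m smap sigma (ch L2.-2)) A)
  + \sum_(0 <= i < L1) omega i * frob2 (conv_res X i)
  + \sum_(0 <= j < L2.-1) omegah j * frob2 (fc_res j).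

Definition LS_CNN (X : 'M[R]_(d, N)) (A : 'M[R]_(J, N)) : R :=
  (Num.sqrt (N%:R))^-1 * Num.sqrt (Tlift X A).

End CNN.

From HB Require Import structures.
From mathcomp Require Import all_boot all_order all_algebra.
From mathcomp Require Import reals sequences exp.
From mathcomp Require Import ring lra zify.
Import Order.TTheory GRing.Theory Num.Theory.
Local Open Scope ring_scope.
Set Implicit Arguments. Unset Strict Implicit. Unset Printing Implicit Defensive.

(* Propagate the whole data matrix through the network and compare layer t
   with its auxiliary variable (c_l or ĉ_l).  Since σ is B-Lipschitz and the
   Frobenius norm is submultiplicative, the errors e_t obey
   e_{t+1} <= B ‖W_{t+1}‖ e_t + r_{t+1}, where W_{t+1} is the matrix applied
   by layer t+1 (K_l P_{l-1}, Ŵ_1 P_{L1} or Ŵ_l) and r_t is the norm of the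
   t-th residual of T.  The weights satisfy √ω_t = ‖W_{t+1}‖ √ω_{t+1}, so
   x_t = √ω_t e_t obeys the discrete Grönwall inequality
   x_{t+1} <= B x_t + √ω_{t+1} r_{t+1}, which bounds the output error by
   max(B, B^{L1+L2-1}) Σ_t √ω_t r_t.  With a one-hot label the cross-entropy
   is √2-Lipschitz in the logits, and Cauchy-Schwarz, over the samples and
   over the L1 + L2 summands of T, produces C_B √(L1+L2-1). *)

Lemma cauchy_schwarz_sqr (R : realDomainType) (I : Type) (r : seq I) (u v : I -> R) :
  (\sum_(i <- r) u i * v i) ^+ 2 <=
  (\sum_(i <- r) u i ^+ 2) * (\sum_(i <- r) v i ^+ 2).
Proof.
have lagrange : \sum_(i <- r) \sum_(j <- r) (u i * v j - u j * v i) ^+ 2 =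
    2 * ((\sum_(i <- r) u i ^+ 2) * (\sum_(i <- r) v i ^+ 2)
         - (\sum_(i <- r) u i * v i) ^+ 2).
  rewrite (eq_bigr (fun i => u i ^+ 2 * \sum_(j <- r) v j ^+ 2
      + v i ^+ 2 * \sum_(j <- r) u j ^+ 2
      - 2 * (u i * v i) * \sum_(j <- r) u j * v j)); last first.
    move=> i _; rewrite !mulr_sumr -!big_split -sumrN -big_split /=.
    by apply: eq_bigr => j _; ring.
  by rewrite !big_split /= sumrN -!mulr_suml -mulr_sumr; ring.
have : 0 <= \sum_(i <- r) \sum_(j <- r) (u i * v j - u j * v i) ^+ 2.
  by apply: sumr_ge0 => i _; apply: sumr_ge0 => j _; apply: sqr_ge0.
by rewrite lagrange pmulr_rge0 // subr_ge0.
Qed.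

Lemma cauchy_schwarz (R : rcfType) (I : Type) (r : seq I) (u v : I -> R) :
  \sum_(i <- r) u i * v i <=
  Num.sqrt (\sum_(i <- r) u i ^+ 2) * Num.sqrt (\sum_(i <- r) v i ^+ 2).
Proof.
rewrite -sqrtrM; last by apply: sumr_ge0 => i _; apply: sqr_ge0.
apply: le_trans (ler_norm _) _.
rewrite -sqrtr_sqr ler_sqrt; first exact: cauchy_schwarz_sqr.
by apply: mulr_ge0; apply: sumr_ge0 => i _; apply: sqr_ge0.
Qed.

Lemma sqrt_add_sum_le (R : rcfType) (a s : R) (L : nat) (y : nat -> R) :
  0 <= a ->
  Num.sqrt a + s * \sum_(t < L) y t <=
  Num.sqrt (1 + s ^+ 2 * L%:R) * Num.sqrt (a + \sum_(t < L) y t ^+ 2).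
Proof.
move=> a0.
pose u k := if k is 0 then 1 else s.
pose v k := if k is j.+1 then y j else Num.sqrt a.
have := cauchy_schwarz (index_iota 0 L.+1) u v.
rewrite !big_nat_recl //= expr1n sqr_sqrtr // mul1r !big_mkord mulr_sumr.
by rewrite sumr_const card_ord mulr_natr.
Qed.

Lemma sqrt_one_add_le (R : rcfType) (q C : R) (L : nat) :
  0 <= q -> Num.sqrt 2 <= C -> 2 * q <= C -> (0 < L)%N ->
  Num.sqrt (1 + (Num.sqrt 2 * q) ^+ 2 * L%:R) <= C * Num.sqrt L%:R.
Proof.
move=> q_ge0 sqrt2_le q_le L_gt0.
have C_ge0 : 0 <= C := le_trans (sqrtr_ge0 2) sqrt2_le.
have C2 : 2 <= C ^+ 2.
  by rewrite -[2 in leLHS]sqr_sqrtr ?ler0n // lerXn2r ?nnegrE ?sqrtr_ge0.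
have Cq : (2 * q) ^+ 2 <= C ^+ 2 by rewrite lerXn2r ?nnegrE ?mulr_ge0.
have L_ge1 : 1 <= L%:R :> R by rewrite ler1n.
rewrite -[C]ger0_norm // -sqrtr_sqr -sqrtrM ?sqr_ge0 // ler_sqrt ?mulr_ge0 ?sqr_ge0 //.
rewrite !exprMn sqr_sqrtr ?ler0n // in Cq *.
nra.
Qed.

Lemma invr_mul_sqrtr (R : rcfType) (x : R) : 0 <= x -> x^-1 * Num.sqrt x = (Num.sqrt x)^-1.
Proof.
move=> x_ge0; rewrite -{1}(sqr_sqrtr x_ge0) expr2 invfM -mulrA.
by have [-> | s_neq0] := eqVneq (Num.sqrt x) 0; rewrite ?invr0 ?mul0r // mulVf ?mulr1.
Qed.

Lemma sum_le_sqrt_card (R : rcfType) (N : nat) (x : 'I_N -> R) :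
  \sum_(k < N) x k <= Num.sqrt N%:R * Num.sqrt (\sum_(k < N) x k ^+ 2).
Proof.
have := cauchy_schwarz (index_enum 'I_N) (fun=> 1) x.
by rewrite expr1n sumr_const card_ord; under eq_bigr do rewrite mul1r.
Qed.

Lemma expr_le_max (R : realDomainType) (B : R) (e L : nat) :
  0 <= B -> (0 < e <= L)%N -> B ^+ e <= Num.max B (B ^+ L).
Proof.
move=> B0 /andP[e0 eL]; rewrite le_max; case: (leP B 1) => [B1 | /ltW B1].
  by rewrite -[leRHS]expr1 ler_wiXn2l.
by rewrite ler_weXn2l ?orbT.
Qed.

Lemma discrete_gronwall (R : realDomainType) (B : R) (x y : nat -> R) (T : nat) :
  0 <= B -> x 0%N <= y 0%N ->
  (forall t, (t < T)%N -> x t.+1 <= B * x t + y t.+1) ->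
  x T <= \sum_(k < T.+1) B ^+ (T - k) * y k.
Proof.
move=> B0 x0 step; elim: T step => [|T IH] step.
  by rewrite big_ord1 expr0 mul1r.
apply: le_trans (step T (ltnSn T)) _.
rewrite big_ord_recr /= subnn expr0 mul1r lerD2r.
apply: le_trans (ler_wpM2l B0 (IH (fun t tT => step t (ltnW tT)))) _.
rewrite mulr_sumr; apply: ler_sum => k _.
by rewrite mulrA -exprS subSn // -ltnS.
Qed.
Section Frobenius.
Variable R : realType.

Definition normF (a b : nat) (M : 'M[R]_(a, b)) : R := Num.sqrt (frob2 M).

Lemma frob2_ge0 a b (M : 'M[R]_(a, b)) : 0 <= frob2 M.
Proof. by apply: sumr_ge0 => i _; apply: sumr_ge0 => j _; apply: sqr_ge0. Qed.

Lemma normF_ge0 a b (M : 'M[R]_(a, b)) : 0 <= normF M.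
Proof. exact: sqrtr_ge0. Qed.

Lemma sqr_normF a b (M : 'M[R]_(a, b)) : normF M ^+ 2 = frob2 M.
Proof. by rewrite sqr_sqrtr // frob2_ge0. Qed.

Lemma frob2_pairE a b (M : 'M[R]_(a, b)) :
  frob2 M = \sum_(q : 'I_a * 'I_b) M q.1 q.2 ^+ 2.
Proof. by rewrite /frob2 pair_bigA. Qed.

Lemma frob2_colE a b (M : 'M[R]_(a, b)) : frob2 M = \sum_(k < b) frob2 (col k M).
Proof.
rewrite /frob2 exchange_big /=; apply: eq_bigr => k _.
by apply: eq_bigr => i _; rewrite big_ord1 mxE.
Qed.

Lemma frob2_mulmx_le a b e (M : 'M[R]_(a, b)) (Q : 'M[R]_(b, e)) :
  frob2 (M *m Q) <= frob2 M * frob2 Q.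
Proof.
rewrite /frob2 mulr_suml; apply: ler_sum => i _.
rewrite [X in _ * X]exchange_big /= mulr_sumr; apply: ler_sum => k _.
by rewrite mxE; apply: cauchy_schwarz_sqr.
Qed.

Lemma normF_mulmx_le a b e (M : 'M[R]_(a, b)) (Q : 'M[R]_(b, e)) :
  normF (M *m Q) <= normF M * normF Q.
Proof.
rewrite /normF -sqrtrM ?frob2_ge0 // ler_sqrt ?frob2_mulmx_le //.
by rewrite mulr_ge0 ?frob2_ge0.
Qed.

Lemma normF_addmx_le a b (M Q : 'M[R]_(a, b)) : normF (M + Q) <= normF M + normF Q.
Proof.
rewrite -[leRHS]ger0_norm ?addr_ge0 ?normF_ge0 // -sqrtr_sqr ler_sqrt ?sqr_ge0 //.
rewrite sqrrD !sqr_normF !frob2_pairE.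
have -> : \sum_(q : 'I_a * 'I_b) (M + Q) q.1 q.2 ^+ 2 =
    \sum_(q : 'I_a * 'I_b) M q.1 q.2 ^+ 2
    + (\sum_(q : 'I_a * 'I_b) M q.1 q.2 * Q q.1 q.2) *+ 2
    + \sum_(q : 'I_a * 'I_b) Q q.1 q.2 ^+ 2.
  rewrite -sumrMnl -!big_split /=; apply: eq_bigr => q _.
  by rewrite mxE sqrrD.
by rewrite lerD2r lerD2l lerMn2r /= /normF !frob2_pairE cauchy_schwarz.
Qed.

Lemma normF_smap_sub_le (sigma : R -> R) (B : R) a b (M Q : 'M[R]_(a, b)) :
  0 <= B -> lipschitz_with sigma B ->
  normF (smap sigma M - smap sigma Q) <= B * normF (M - Q).
Proof.
move=> B0 lip; rewrite /normF -[B]ger0_norm // -sqrtr_sqr -sqrtrM ?sqr_ge0 //.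
rewrite ler_sqrt ?mulr_ge0 ?sqr_ge0 ?frob2_ge0 // /frob2 mulr_sumr.
apply: ler_sum => i _; rewrite mulr_sumr; apply: ler_sum => j _; rewrite !mxE.
rewrite -[leLHS]real_normK ?num_real // -[X in _ <= _ * X]real_normK ?num_real //.
by rewrite -exprMn lerXn2r ?nnegrE ?mulr_ge0 ?normr_ge0 ?lip.
Qed.

Lemma sum_normF_col_le a N (M : 'M[R]_(a, N)) :
  \sum_(k < N) normF (col k M) <= Num.sqrt N%:R * normF M.
Proof.
apply: le_trans (sum_le_sqrt_card _) _.
by under eq_bigr do rewrite sqr_normF; rewrite -frob2_colE.
Qed.

Lemma weighted_layer_step (sigma : R -> R) (B : R) a b e
    (M : 'M[R]_(a, b)) (Y Z : 'M[R]_(b, e)) (E : 'M[R]_(a, e)) (w w' : R) :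
  0 <= B -> lipschitz_with sigma B -> 0 <= w' -> w = frob2 M * w' ->
  Num.sqrt w' * normF (M *m (smap sigma Y - smap sigma Z) + E)
  <= B * (Num.sqrt w * normF (Y - Z)) + Num.sqrt w' * normF E.
Proof.
move=> B_ge0 lip w'_ge0 ->; rewrite sqrtrM ?frob2_ge0 // -/(normF M).
apply: le_trans (ler_wpM2l (sqrtr_ge0 _) (normF_addmx_le _ _)) _.
rewrite mulrDr lerD2r.
apply: le_trans (ler_wpM2l (sqrtr_ge0 _) (normF_mulmx_le _ _)) _.
rewrite mulrA.
apply: le_trans (ler_wpM2l _ (normF_smap_sub_le Y Z B_ge0 lip)) _.
  by rewrite mulr_ge0 ?sqrtr_ge0 ?normF_ge0.
have -> : B * (normF M * Num.sqrt w' * normF (Y - Z))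
        = Num.sqrt w' * normF M * (B * normF (Y - Z)) by ring.
exact: lexx.
Qed.

End Frobenius.

Section CrossEntropy.
Variable R : realType.

Lemma one_hot_colP J (a : 'cV[R]_J) :
  (forall j, a j 0 = 0 \/ a j 0 = 1) -> \sum_(j < J) a j 0 = 1 ->
  exists j0, forall j, a j 0 = (j == j0)%:R.
Proof.
move=> a01 a_sum.
have [j0 /eqP aj0 | a_ne1] := pickP (fun j => a j 0 == 1); last first.
  move: a_sum; rewrite big1 => [/eqP | j _]; first by rewrite eq_sym oner_eq0.
  by case: (a01 j) => // aj; move: (a_ne1 j); rewrite aj eqxx.
exists j0 => j; case: eqVneq => [-> // | jj0].
have rest : \sum_(k < J | k != j0) a k 0 = 0.
  by move: a_sum; rewrite (bigD1 j0) //= aj0; lra.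
by apply: (psumr_eq0P _ rest) => // k _; case: (a01 k) => ->.
Qed.

Lemma sum_expR_gt0 (I : finType) (i0 : I) (f : I -> R) : 0 < \sum_i expR (f i).
Proof.
apply: (lt_le_trans (expR_gt0 (f i0))).
by rewrite (bigD1 i0) //= lerDl sumr_ge0 // => i _; apply/ltW/expR_gt0.
Qed.

Lemma xent_indicator J (w a : 'cV[R]_J) (j0 : 'I_J) :
  (forall j, a j 0 = (j == j0)%:R) ->
  xent w a = ln (\sum_(k < J) expR (w k 0)) - w j0 0.
Proof.
move=> aE; rewrite /xent (bigD1 j0) //= [X in _ + X]big1 => [|j jj0]; last first.
  by rewrite aE (negbTE jj0) mul0r.
have S_gt0 := sum_expR_gt0 j0 (fun k => w k 0).
rewrite aE eqxx mul1r addr0 lnM ?posrE ?expR_gt0 ?invr_gt0 //.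
by rewrite expRK lnV ?posrE // opprD opprK addrC.
Qed.

Lemma ln_sum_expR_le (I : finType) (i0 : I) (f g : I -> R) (s : R) :
  (forall i, f i <= g i + s) ->
  ln (\sum_i expR (f i)) <= ln (\sum_i expR (g i)) + s.
Proof.
move=> fg; have Sg_gt0 := sum_expR_gt0 i0 g.
rewrite -[s in _ + s]expRK -lnM ?posrE ?expR_gt0 //.
rewrite ler_ln ?posrE ?mulr_gt0 ?expR_gt0 ?(sum_expR_gt0 i0) // mulr_suml.
by apply: ler_sum => i _; rewrite -expRD ler_expR.
Qed.

Lemma col_entry_sub_le J (v : 'cV[R]_J) (j k : 'I_J) :
  v k 0 - v j 0 <= Num.sqrt 2 * normF v.
Proof.
have [-> | kj] := eqVneq k j.
  by rewrite subrr mulr_ge0 ?sqrtr_ge0 ?normF_ge0.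
have pair_le : v k 0 ^+ 2 + v j 0 ^+ 2 <= frob2 v.
  have -> : frob2 v = \sum_i v i 0 ^+ 2 by apply: eq_bigr => i _; rewrite big_ord1.
  rewrite (bigD1 j) //= (bigD1 k) ?kj //= addrCA addrA lerDl.
  by apply: sumr_ge0 => i _; apply: sqr_ge0.
apply: le_trans (ler_norm _) _.
rewrite -sqrtr_sqr /normF -sqrtrM // ler_sqrt ?mulr_ge0 ?frob2_ge0 //.
apply: le_trans (ler_wpM2l _ pair_le) => //.
rewrite -subr_ge0.
have -> : 2 * (v k 0 ^+ 2 + v j 0 ^+ 2) - (v k 0 - v j 0) ^+ 2 = (v k 0 + v j 0) ^+ 2.
  by ring.
exact: sqr_ge0.
Qed.

Lemma xent_lipschitz J (z z' a : 'cV[R]_J) :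
  (forall j, a j 0 = 0 \/ a j 0 = 1) -> \sum_(j < J) a j 0 = 1 ->
  xent z a <= xent z' a + Num.sqrt 2 * normF (z - z').
Proof.
move=> a01 a_sum; have [j0 aE] := one_hot_colP a01 a_sum.
rewrite !(xent_indicator _ aE).
have shift k : z k 0 <= z' k 0 + (z j0 0 - z' j0 0 + Num.sqrt 2 * normF (z - z')).
  by have := col_entry_sub_le (z - z') j0 k; rewrite !mxE; lra.
by have := ln_sum_expR_le j0 shift; lra.
Qed.

Lemma sum_xent_le J N (Z Z' A : 'M[R]_(J, N)) : one_hot_cols A ->
  \sum_(k < N) xent (col k Z) (col k A)
  <= Num.sqrt N%:R * (normF (Lvec Z' A) + Num.sqrt 2 * normF (Z - Z')).
Proof.
move=> hA.
have col_le k : xent (col k Z) (col k A)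
    <= xent (col k Z') (col k A) + Num.sqrt 2 * normF (col k (Z - Z')).
  have [a01 a_sum] := hA k.
  have -> : col k (Z - Z') = col k Z - col k Z' by rewrite !colE mulmxBl.
  by apply: xent_lipschitz => [j | ]; rewrite ?mxE // -a_sum; under eq_bigr do rewrite mxE.
apply: le_trans (ler_sum _ (fun k _ => col_le k)) _.
rewrite big_split /= -mulr_sumr mulrDr; apply: lerD.
  apply: le_trans (sum_le_sqrt_card _) _; rewrite /normF /frob2 big_ord1.
  by under [X in _ <= _ * Num.sqrt X]eq_bigr do rewrite mxE.
by rewrite mulrCA ler_wpM2l ?sqrtr_ge0 ?sum_normF_col_le.
Qed.

End CrossEntropy.

Section Columns.
Variable R : realType.

Lemma col_mulmx a b e (M : 'M[R]_(a, b)) (Q : 'M[R]_(b, e)) k :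
  col k (M *m Q) = M *m col k Q.
Proof. by rewrite !colE mulmxA. Qed.

Lemma col_addmx a b (M Q : 'M[R]_(a, b)) k : col k (M + Q) = col k M + col k Q.
Proof. by rewrite !colE mulmxDl. Qed.

Lemma col_smap (sigma : R -> R) a b (M : 'M[R]_(a, b)) k :
  col k (smap sigma M) = smap sigma (col k M).
Proof. exact/esym/map_col. Qed.

Lemma col_mul_ones a N (v : 'cV[R]_a) k : col k (v *m ones R N) = v.
Proof. by apply/matrixP => i j; rewrite !mxE big_ord1 !mxE mulr1 (ord1 j). Qed.

End Columns.

Section Network.
Variables (R : realType) (sigma : R -> R) (B : R).
Variables (d J N L1 L2 : nat) (m p n : nat -> nat).
Variable K : forall i : nat, 'M[R]_(m i, qin d p i).
Variable P : forall i : nat, 'M[R]_(p i, m i).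
Variable b : forall i : nat, 'cV[R]_(m i).
Variable c : forall i : nat, 'M[R]_(m i, N).
Variable Wh : forall j : nat, 'M[R]_(n j, fin L1 p n j).
Variable bh : forall j : nat, 'cV[R]_(n j).
Variable ch : forall j : nat, 'M[R]_(n j, N).
Variable Wl : 'M[R]_(J, n L2.-2).
Variable X : 'M[R]_(d, N).
Hypothesis L1_gt0 : (0 < L1)%N.
Hypothesis L2_gt1 : (1 < L2)%N.
Hypothesis B_ge0 : 0 <= B.
Hypothesis sigma_lip : lipschitz_with sigma B.

Fixpoint conv_fwd (i : nat) : 'M[R]_(m i, N) :=
  match i as i0 return 'M[R]_(m i0, N) with
  | 0 => K 0 *m X + b 0 *m ones R N
  | S j => K (S j) *m (P j *m smap sigma (conv_fwd j)) + b (S j) *m ones R N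
  end.

Fixpoint fc_fwd (j : nat) : 'M[R]_(n j, N) :=
  match j as j0 return 'M[R]_(n j0, N) with
  | 0 => Wh 0 *m (P L1.-1 *m smap sigma (conv_fwd L1.-1)) + bh 0 *m ones R N
  | S k => Wh (S k) *m smap sigma (fc_fwd k) + bh (S k) *m ones R N
  end.

Lemma col_conv_fwd k i : col k (conv_fwd i) = conv_pre sigma K P b (col k X) i.
Proof.
by elim: i => [|i IH] /=; rewrite col_addmx col_mul_ones !col_mulmx ?col_smap ?IH.
Qed.

Lemma col_fc_fwd k j : col k (fc_fwd j) = fc_pre sigma K P b Wh bh (col k X) j.
Proof.
elim: j => [|j IH] /=; rewrite col_addmx col_mul_ones !col_mulmx col_smap //.
  by rewrite col_conv_fwd.
by rewrite IH.
Qed.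

Lemma phi_CNN_matE :
  phi_CNN_mat sigma K P b Wh bh Wl X = Wl *m smap sigma (fc_fwd L2.-2).
Proof.
apply/matrixP => i k; rewrite mxE.
have -> : (Wl *m smap sigma (fc_fwd L2.-2)) i k
        = col k (Wl *m smap sigma (fc_fwd L2.-2)) i 0 by rewrite [RHS]mxE.
by rewrite col_mulmx col_smap col_fc_fwd.
Qed.

Lemma conv_fwd_sub_S i : conv_fwd i.+1 - c i.+1 =
  (K i.+1 *m P i) *m (smap sigma (conv_fwd i) - smap sigma (c i))
  + conv_res sigma K P b c X i.+1.
Proof. by rewrite /= -mulmxA !mulmxBr !addrA subrK. Qed.

Lemma fc_fwd_sub_0 : fc_fwd 0 - ch 0 =
  (Wh 0 *m P L1.-1) *m (smap sigma (conv_fwd L1.-1) - smap sigma (c L1.-1))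
  + fc_res sigma P Wh bh c ch 0.
Proof. by rewrite /= -mulmxA !mulmxBr !addrA subrK. Qed.

Lemma fc_fwd_sub_S j : fc_fwd j.+1 - ch j.+1 =
  Wh j.+1 *m (smap sigma (fc_fwd j) - smap sigma (ch j)) + fc_res sigma P Wh bh c ch j.+1.
Proof. by rewrite /= mulmxBr !addrA subrK. Qed.

Lemma omega_S i : (i.+1 < L1)%N ->
  omega K P Wh Wl i = frob2 (K i.+1 *m P i) * omega K P Wh Wl i.+1.
Proof. by move=> iL; rewrite /omega big_ltn // mulrCA. Qed.

Lemma omega_pred_L1 :
  omega K P Wh Wl L1.-1 = frob2 (Wh 0 *m P L1.-1) * omegah Wh Wl 0.
Proof. by rewrite /omega prednK // big_geq // mulr1 mulrC. Qed.

Lemma omegah_S j : (j.+1 < L2.-1)%N ->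
  omegah Wh Wl j = frob2 (Wh j.+1) * omegah Wh Wl j.+1.
Proof. by move=> jL; rewrite /omegah big_ltn // mulrA. Qed.

Lemma omegah_last : omegah Wh Wl L2.-2 = frob2 Wl.
Proof. by rewrite /omegah big_geq ?mul1r //; lia. Qed.

(* The L1 convolutional layers are numbered 0, ..., L1 - 1 and the fully
   connected hidden layers L1, ..., L1 + L2 - 2. *)
Definition layer_weight t :=
  if (t < L1)%N then omega K P Wh Wl t else omegah Wh Wl (t - L1).

Definition layer_err t :=
  if (t < L1)%N then normF (conv_fwd t - c t)
  else normF (fc_fwd (t - L1) - ch (t - L1)).

Definition layer_res t :=
  if (t < L1)%N then normF (conv_res sigma K P b c X t)
  else normF (fc_res sigma P Wh bh c ch (t - L1)).

Definition weighted_res t := Num.sqrt (layer_weight t) * layer_res t.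

Lemma omega_ge0 i : 0 <= omega K P Wh Wl i.
Proof.
rewrite /omega /omega_last !mulr_ge0 ?frob2_ge0 //.
all: by apply: prodr_ge0 => -[|k] _ //=; rewrite frob2_ge0.
Qed.

Lemma omegah_ge0 j : 0 <= omegah Wh Wl j.
Proof. by rewrite /omegah mulr_ge0 ?frob2_ge0 //; apply: prodr_ge0 => k _; rewrite frob2_ge0. Qed.

Lemma layer_weight_ge0 t : 0 <= layer_weight t.
Proof. by rewrite /layer_weight; case: ifP; rewrite (omega_ge0, omegah_ge0). Qed.

Lemma weighted_res_ge0 t : 0 <= weighted_res t.
Proof.
by rewrite /weighted_res mulr_ge0 ?sqrtr_ge0 // /layer_res; case: ifP; rewrite normF_ge0.
Qed.

Lemma weighted_err_step t : (t < L1 + L2.-2)%N ->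
  Num.sqrt (layer_weight t.+1) * layer_err t.+1
  <= B * (Num.sqrt (layer_weight t) * layer_err t) + weighted_res t.+1.
Proof.
move=> tT; rewrite /weighted_res /layer_weight /layer_err /layer_res.
have [tL | Lt | tL] := ltngtP t.+1 L1.
- have step := weighted_layer_step (conv_fwd t) (c t) (conv_res sigma K P b c X t.+1)
    B_ge0 sigma_lip (omega_ge0 _) (omega_S tL).
  (* [exact], not [by]: [done] would try to match [B_ge0] and unfold the weights *)
  rewrite conv_fwd_sub_S; exact step.
- have jL : ((t - L1).+1 < L2.-1)%N by lia.
  have step := weighted_layer_step (fc_fwd (t - L1)) (ch (t - L1))
    (fc_res sigma P Wh bh c ch (t - L1).+1) B_ge0 sigma_lip (omegah_ge0 _) (omegah_S jL).
  rewrite (subSn (Lt : (L1 <= t)%N)) fc_fwd_sub_S; exact step.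
- have step := weighted_layer_step (conv_fwd L1.-1) (c L1.-1) (fc_res sigma P Wh bh c ch 0)
    B_ge0 sigma_lip (omegah_ge0 _) omega_pred_L1.
  have -> : t = L1.-1 by rewrite -tL.
  rewrite (prednK L1_gt0) subnn fc_fwd_sub_0; exact step.
Qed.

Lemma output_err_le :
  normF (Wl *m smap sigma (fc_fwd L2.-2) - Wl *m smap sigma (ch L2.-2))
  <= B * (Num.sqrt (layer_weight (L1 + L2.-2)) * layer_err (L1 + L2.-2)).
Proof.
rewrite /layer_weight /layer_err ltnNge leq_addr /= addKn omegah_last -/(normF Wl).
rewrite -mulmxBr mulrCA; apply: le_trans (normF_mulmx_le _ _) _.
by rewrite ler_wpM2l ?normF_ge0 ?normF_smap_sub_le.
Qed.

Lemma output_err_bound :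
  normF (Wl *m smap sigma (fc_fwd L2.-2) - Wl *m smap sigma (ch L2.-2))
  <= Num.max B (B ^+ (L1 + L2.-1)) * \sum_(t < L1 + L2.-1) weighted_res t.
Proof.
have gronwall := discrete_gronwall
  (x := fun t => Num.sqrt (layer_weight t) * layer_err t) B_ge0 _ weighted_err_step.
have -> : (L1 + L2.-1 = (L1 + L2.-2).+1)%N by lia.
apply: le_trans output_err_le _.
apply: le_trans (ler_wpM2l B_ge0 (gronwall _)) _.
  by rewrite /weighted_res /layer_err /layer_res L1_gt0.
rewrite !mulr_sumr; apply: ler_sum => k _.
rewrite mulrA -exprS ler_wpM2r ?weighted_res_ge0 // expr_le_max //.
by rewrite ltn0Sn ltnS leq_subr.
Qed.

Lemma Tlift_split A :
  Tlift sigma K P b Wh bh Wl c ch X A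
  = frob2 (Lvec (Wl *m smap sigma (ch L2.-2)) A)
    + \sum_(t < L1 + L2.-1) weighted_res t ^+ 2.
Proof.
have wres_sqr t : weighted_res t ^+ 2 = layer_weight t * layer_res t ^+ 2.
  by rewrite /weighted_res exprMn sqr_sqrtr ?layer_weight_ge0.
rewrite /Tlift -addrA -(big_mkord xpredT (fun t => weighted_res t ^+ 2)).
rewrite (@big_cat_nat _ _ _ L1 0 _ _ _ (leq0n L1) (leq_addr _ _)) /=.
congr (_ + (_ + _)).
  apply: eq_big_nat => t /andP[_ tL].
  by rewrite wres_sqr /layer_weight /layer_res tL sqr_normF.
rewrite (@big_addn _ _ _ 0 (L1 + L2.-1) L1) addKn; apply: eq_bigr => j _.
by rewrite wres_sqr /layer_weight /layer_res ltnNge leq_addl /= addnK sqr_normF.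
Qed.

Lemma sum_xent_phi_le A : one_hot_cols A ->
  \sum_(k < N) xent (col k (phi_CNN_mat sigma K P b Wh bh Wl X)) (col k A)
  <= Num.sqrt N%:R * (normF (Lvec (Wl *m smap sigma (ch L2.-2)) A)
     + Num.sqrt 2 * Num.max B (B ^+ (L1 + L2.-1))
       * \sum_(t < L1 + L2.-1) weighted_res t).
Proof.
move=> hA; rewrite phi_CNN_matE.
apply: le_trans (sum_xent_le _ (Wl *m smap sigma (ch L2.-2)) hA) _.
apply: ler_wpM2l; first exact: sqrtr_ge0.
rewrite lerD2l -mulrA; apply: ler_wpM2l; first exact: sqrtr_ge0.
exact: output_err_bound.
Qed.

End Network.

Theorem theorem4p1 (R : realType) (sigma : R -> R) (B : R)
  (d J N L1 L2 : nat) (m p n : nat -> nat)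
  (X : 'M[R]_(d, N)) (A : 'M[R]_(J, N))
  (K : forall i : nat, 'M[R]_(m i, qin d p i))
  (P : forall i : nat, 'M[R]_(p i, m i))
  (b : forall i : nat, 'cV[R]_(m i))
  (c : forall i : nat, 'M[R]_(m i, N))
  (Wh : forall j : nat, 'M[R]_(n j, fin L1 p n j))
  (bh : forall j : nat, 'cV[R]_(n j))
  (ch : forall j : nat, 'M[R]_(n j, N))
  (Wl : 'M[R]_(J, n L2.-2)) :
  (1 <= L1)%N -> (2 <= L2)%N ->
  one_hot_cols A ->
  0 < B -> lipschitz_with sigma B ->
  Lmean (@phi_CNN_mat R sigma d J L1 L2 m p n K P b Wh bh Wl N X) A
  <= Num.max (Num.max (Num.sqrt 2) (2 * B)) (2 * B ^+ (L1 + L2 - 1))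
     * Num.sqrt ((L1 + L2 - 1)%:R)
     * @LS_CNN R sigma d J L1 L2 m p n K P b Wh bh Wl N c ch X A.
Proof.
move=> L1_gt0 L2_gt1 hA B_gt0 lip; have B_ge0 := ltW B_gt0.
have -> : (L1 + L2 - 1 = L1 + L2.-1)%N by lia.
set C := Num.max _ _.
have sqrt2_le : Num.sqrt 2 <= C by rewrite !le_max lexx.
have q_le : 2 * Num.max B (B ^+ (L1 + L2.-1)) <= C.
  by rewrite maxr_pMr ?ler0n // ge_max !le_max !lexx !orbT.
rewrite /Lmean /LS_CNN Tlift_split.
apply: le_trans (ler_wpM2l _ (sum_xent_phi_le K P b c Wh bh ch Wl X L1_gt0 L2_gt1 B_ge0 lip hA)) _.
  by rewrite invr_ge0 ler0n.
rewrite mulrA (invr_mul_sqrtr (ler0n _ _)) [leRHS]mulrCA.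
apply: ler_wpM2l; first by rewrite invr_ge0 sqrtr_ge0.
apply: le_trans (sqrt_add_sum_le _ _ _ (frob2_ge0 _)) _.
apply: ler_wpM2r; first exact: sqrtr_ge0.
apply: sqrt_one_add_le => //; first by rewrite le_max B_ge0.
by rewrite addn_gt0 L1_gt0.
Qed.
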